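(* Let $N=\begin{pmatrix}0&1&0\\0&0&1\\0&0&0\end{pmatrix}$, $\xi=(x,y,z)^T$, $\beta=2zx-y^2$, and $d\ge1$. The space $\ker(\mathrm{ad}_{N^*})\cap V^3_d$ (the orthogonal complement of $\mathrm{rng}\,\mathrm{ad}_N$ in $F^3_d$, intersected with $V^3_d$) consists exactly of the vector fields $$h=\begin{pmatrix}x^2\psi_1\\ xy\,\psi_1+x\psi_2\\ \tfrac12 y^2\psi_1+y\psi_2+\psi_3\end{pmatrix},$$ where $\psi_i=\psi_i(x,\beta)$ are polynomials in the two quantities $x$ and $\beta$ (so that $\psi_1,\psi_2,\psi_3$ are homogeneous in $\xi$ of degrees $d-2,d-1,d$ respectively) and $\psi_3$ satisfies $$-2\,\partial_\beta\psi_3=x\,\partial_x\psi_1+3\psi_1+\beta\,\partial_\beta\psi_1,$$ the partial derivatives being taken with respect to the two arguments $(x,\beta)$. The dimension of this space is $d+1$.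
   Context: $F^3_d$ is the space of vector fields on $\mathbb{R}^3$ with components real homogeneous polynomials of degree $d$, $V^3_d=\{v\in F^3_d:\nabla\cdot v=0\}$. $\mathrm{ad}_A h(\xi)=Dh(\xi)A\xi-Ah(\xi)$, $N^*=N^T$. The inner product on $F^3_d$ is $\langle p,q\rangle=\sum_i p_i(\partial_\xi)q_i(\xi)|_{\xi=0}$; with respect to it the adjoint of $\mathrm{ad}_N$ is $\mathrm{ad}_{N^*}$, so $\ker\mathrm{ad}_{N^*}$ is the orthogonal complement (cokernel) of $\mathrm{rng}\,\mathrm{ad}_N$. *)

From HB Require Import structures.
From mathcomp Require Import all_boot all_order all_algebra.
From mathcomp Require Import mpoly.
Set Implicit Arguments. Unset Strict Implicit. Unset Printing Implicit Defensive.
Import Order.TTheory GRing.Theory Num.Theory.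
Local Open Scope ring_scope.

Definition ix : 'I_3 := @inord 2 0.
Definition iy : 'I_3 := @inord 2 1.
Definition iz : 'I_3 := @inord 2 2.
(* arguments of the bivariate polynomials psi(x, beta) *)
Definition ax : 'I_2 := @inord 1 0.
Definition abeta : 'I_2 := @inord 1 1.

Definition vfield (R : realFieldType) := 'I_3 -> {mpoly R[3]}.

Definition in_F (R : realFieldType) (d : nat) (h : vfield R) : Prop :=
  forall i, h i \is d.-homog.

Definition divergence (R : realFieldType) (h : vfield R) : {mpoly R[3]} :=
  \sum_(i < 3) (h i)^`M(i).

Definition in_V (R : realFieldType) (d : nat) (h : vfield R) : Prop :=
  in_F d h /\ divergence h = 0.

(* ad_A h (xi) = Dh(xi) A xi - A h(xi) *)
Definition ad (R : realFieldType) (A : 'M[R]_3) (h : vfield R) : vfield R :=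
  fun i => \sum_(j < 3) (h i)^`M(j) * (\sum_(k < 3) (A j k)%:MP * 'X_k)
           - \sum_(j < 3) (A i j)%:MP * h j.

Definition Nmat (R : realFieldType) : 'M[R]_3 :=
  \matrix_(i < 3, j < 3) (if j == i.+1 :> nat then 1 else 0).

Definition beta (R : realFieldType) : {mpoly R[3]} :=
  2%:R * 'X_iz * 'X_ix - 'X_iy ^+ 2.

Definition subst_xb (R : realFieldType) (psi : {mpoly R[2]}) : {mpoly R[3]} :=
  psi \mPo [tuple ('X_ix : {mpoly R[3]}); beta R].

(* homogeneous of (integer) degree k; a negative degree forces p = 0 *)
Definition homog_z (R : realFieldType) (k : int) (p : {mpoly R[3]}) : Prop :=
  if (k < 0)%R then p = 0 else p \is (`|k|%N).-homog.

Definition h_of (R : realFieldType) (psi1 psi2 psi3 : {mpoly R[2]}) : vfield R :=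
  let P1 := subst_xb psi1 in let P2 := subst_xb psi2 in let P3 := subst_xb psi3 in
  fun i =>
    if i == ix then 'X_ix ^+ 2 * P1
    else if i == iy then 'X_ix * 'X_iy * P1 + 'X_ix * P2
    else (2%:R)^-1 *: ('X_iy ^+ 2 * P1) + 'X_iy * P2 + P3.

Definition psi_cond (R : realFieldType) (psi1 psi3 : {mpoly R[2]}) : Prop :=
  - (2%:R *: psi3^`M(abeta)) =
    'X_ax * psi1^`M(ax) + 3%:R *: psi1 + 'X_abeta * psi1^`M(abeta).

Definition in_S (R : realFieldType) (d : nat) (h : vfield R) : Prop :=
  in_V d h /\ ad (Nmat R)^T h = (fun _ => 0).

(* Put L = x d_y + y d_z, the derivation along N^T xi.  Componentwise,
   ad_{N^T} h = 0 reads L h_x = 0, L h_y = h_x, L h_z = h_y.  Since L x = L beta = 0,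
   L kills every psi(x, beta); hence the fields h_of psi1 psi2 psi3 solve these
   equations, and the side condition on psi3 is what makes them divergence free.
   Conversely, on the coefficients of x^a y^b z^c the three equations and the
   divergence become recursions which force h = 0 as soon as d + 1 y-free
   coefficients vanish: that of x^d in h_z and those of x^(d-j) z^j in h_y and h_x.
   The d + 1 fields built from the monomials x^e beta^j are diagonal with respect
   to these coefficients, so they form a basis, and every invariant field is the
   h_of of the corresponding linear combination of the psi's. *)

From HB Require Import structures.
From mathcomp Require Import all_boot all_order all_algebra.
From mathcomp Require Import mpoly.
From mathcomp Require Import ring zify.
From Stdlib Require Import FunctionalExtensionality.
Import Order.TTheory GRing.Theory Num.Theory.
Set Implicit Arguments. Unset Strict Implicit. Unset Printing Implicit Defensive.
Local Open Scope ring_scope.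

(* The coefficient of x^a y^b z^c in L p = x d_y p + y d_z p, where g holds
   the coefficients of p. *)
Definition Lcoef (R : nmodType) (g : nat -> nat -> nat -> R) a b c : R :=
  (if a is a'.+1 then g a' b.+1 c *+ b.+1 else 0) +
  (if b is b'.+1 then g a b' c.+1 *+ c.+1 else 0).

Section CoefficientRecursion.
Variable R : numDomainType.
Implicit Types g T : nat -> nat -> nat -> R.

Lemma natmul_eq0 (x : R) n : (0 < n)%N -> x *+ n = 0 -> x = 0.
Proof. by move=> n0 /eqP; rewrite mulrn_eq0 (negbTE (lt0n_neq0 n0)) => /eqP. Qed.

Lemma mulrSnI (x y : R) n : x *+ n.+1 = y *+ n.+1 -> x = y.
Proof. by move/eqP; rewrite eqr_pMn2r // => /eqP. Qed.

Lemma Lcoef_ker_eq0 g : (forall a b c, Lcoef g a b c = 0) ->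
  (forall a c, g a 0 c = 0) -> forall a b c, g a b c = 0.
Proof.
move=> gL g0; suff gb b a c : g a b c = 0 /\ g a b.+1 c = 0.
  by move=> a b c; case: (gb b a c).
elim: b a c => [|b IH] a c.
  by rewrite g0; have := gL a.+1 0%N c; rewrite /Lcoef addr0 mulr1n.
split; first by case: (IH a c).
have := gL a.+1 b.+1 c; rewrite /Lcoef; case: (IH a.+1 c.+1) => -> _.
by rewrite mul0rn addr0 => /natmul_eq0; apply.
Qed.

Section KernelOfL2.
Variables g T : nat -> nat -> nat -> R.
Hypothesis gL : forall a b c, Lcoef g a b c = T a b c.
Hypothesis TL : forall a b c, Lcoef T a b c = 0.

Lemma Lcoef_odd_slice k a c : g a k.*2.+1 c = T a.+1 k.*2 c.
Proof.
elim: k a c => [|k IH] a c; first by rewrite -gL /Lcoef addr0 mulr1n.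
have eT := TL a.+2 k.*2.+1 c; have eg := gL a.+1 k.*2.+2 c.
rewrite /Lcoef -IH in eT; rewrite /Lcoef in eg.
move/eqP: eT; rewrite addr_eq0 => /eqP eT.
move/(canRL (addrK _)): eg => eg.
by apply: (@mulrSnI _ _ k.*2.+2); rewrite doubleS eg -eT mulrS.
Qed.

Lemma image_yfree_eq0 A C : (A <= C)%N -> T A 0 C = 0.
Proof.
have T1 k c : T 1 k.*2 c.+1 = 0.
  have := TL 1 k.*2.+1 c; rewrite /Lcoef -[T 0 _ _]gL /Lcoef /= Lcoef_odd_slice.
  by rewrite add0r -mulrnA -mulrnDr => /natmul_eq0; apply; rewrite addnS.
have Tdiag a k c : T a.+1 k.*2 (a + c).+1 = 0.
  elim: a k c => [|a IH] k c; first by rewrite add0n T1.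
  have := TL a.+2 k.*2.+1 (a + c).+1; rewrite /Lcoef -doubleS IH mul0rn add0r.
  by rewrite addSn => /natmul_eq0; apply.
case: A => [|A] AC; first by rewrite -gL /Lcoef addr0.
by have := Tdiag A 0%N (C - A.+1)%N; rewrite double0 (_ : (A + _).+1 = C) //; lia.
Qed.
End KernelOfL2.

Section KernelOfL3.
Variables g3 g2 g1 : nat -> nat -> nat -> R.
Hypothesis g3L : forall a b c, Lcoef g3 a b c = g2 a b c.
Hypothesis g2L : forall a b c, Lcoef g2 a b c = g1 a b c.
Hypothesis g1L : forall a b c, Lcoef g1 a b c = 0.

Lemma Lcoef_chain_swap a k : g3 a k.*2 a.+1 = g1 a.+1 k.*2 a.
Proof.
have odd2 := Lcoef_odd_slice g2L g1L.
elim: a k => [|a IH] k; first by have := g3L 0 k.*2.+1 0; rewrite /Lcoef odd2 add0r mulr1n.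
have := g3L a.+1 k.*2.+1 a.+1; rewrite /Lcoef odd2 -doubleS IH.
move/(canRL (addKr _)) => e; apply: (@mulrSnI _ _ a.+1); rewrite e.
have := g1L a.+2 k.*2.+1 a; rewrite /Lcoef => /eqP; rewrite addr_eq0 => /eqP.
by rewrite -doubleS => ->; rewrite opprK [RHS]mulrSr.
Qed.
End KernelOfL3.

Section DivergenceFreeChain.
Variable d : nat.
Variables g1 g2 g3 : nat -> nat -> nat -> R.
Hypothesis g1L : forall a b c, Lcoef g1 a b c = 0.
Hypothesis g2L : forall a b c, Lcoef g2 a b c = g1 a b c.
Hypothesis g3L : forall a b c, Lcoef g3 a b c = g2 a b c.
Hypothesis div0 : forall a b c,
  g1 a.+1 b c *+ a.+1 + g2 a b.+1 c *+ b.+1 + g3 a b c.+1 *+ c.+1 = 0.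
Hypothesis g1d : forall a b c, (a + b + c != d)%N -> g1 a b c = 0.
Hypothesis g2d : forall a b c, (a + b + c != d)%N -> g2 a b c = 0.
Hypothesis g3d : forall a b c, (a + b + c != d)%N -> g3 a b c = 0.

Lemma chain_x_eq0 : (forall j, (j.*2.+2 <= d)%N -> g1 (d - j) 0 j = 0) ->
  forall a b c, g1 a b c = 0.
Proof.
move=> g1xz; apply: Lcoef_ker_eq0 => // a c.
have [adc|] := eqVneq (a + 0 + c)%N d; last exact: g1d.
have [ac|ca] := leqP a c; first exact: (image_yfree_eq0 g2L g1L).
have [->|ne] := eqVneq a c.+1; last by rewrite (_ : a = d - c)%N ?g1xz //; lia.
(* On the line a = c + 1, the divergence at x^c z^c is a positive multiple of g1 (c+1) 0 c. *)
have g2g1 : g2 c 1 c = g1 c.+1 0 c by rewrite -g2L /Lcoef addr0 mulr1n.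
have := div0 c 0 c; rewrite g2g1 (Lcoef_chain_swap g3L g2L g1L c 0) -mulrSr -mulrnDr.
by move/natmul_eq0; apply.
Qed.

Lemma chain_y_eq0 : (forall a b c, g1 a b c = 0) ->
  (forall j, (j.*2 < d)%N -> g2 (d - j) 0 j = 0) -> forall a b c, g2 a b c = 0.
Proof.
move=> g1_0 g2xz; have g2L0 a b c : Lcoef g2 a b c = 0 by rewrite g2L.
apply: Lcoef_ker_eq0 => // a c.
have [adc|] := eqVneq (a + 0 + c)%N d; last exact: g2d.
have [ac|ca] := leqP a c; first exact: (image_yfree_eq0 g3L g2L0).
by rewrite (_ : a = d - c)%N ?g2xz //; lia.
Qed.

Lemma chain_z_eq0 : (forall a b c, g1 a b c = 0) -> (forall a b c, g2 a b c = 0) ->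
  g3 d 0 0 = 0 -> forall a b c, g3 a b c = 0.
Proof.
move=> g1_0 g2_0 g3x; have g3L0 a b c : Lcoef g3 a b c = 0 by rewrite g3L.
apply: Lcoef_ker_eq0 => // a [|c].
  by have [e|] := eqVneq (a + 0 + 0)%N d; [move: e; rewrite !addn0 => -> | exact: g3d].
by have := div0 a 0 c; rewrite g1_0 g2_0 mul0rn !add0r => /natmul_eq0; apply.
Qed.
End DivergenceFreeChain.
End CoefficientRecursion.

Lemma mcoeffMXU (R : nzRingType) n (p : {mpoly R[n]}) i m :
  (p * 'X_i)@_m = if (0 < m i)%N then p@_(m - U_(i))%MM else 0.
Proof.
case: ifP => [m_i|m_i].
  have -> : m = (U_(i) + (m - U_(i)))%MM by rewrite addmC submK // lep1mP -lt0n.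
  by rewrite mcoeffMX addmC addmK.
rewrite [p]mpolyE mulr_suml raddf_sum /= big1 // => m' _.
rewrite -scalerAl mcoeffZ -mpolyXD mcoeffX.
case: eqP => [e|]; last by rewrite mulr0.
by move: m_i; rewrite -e mnmDE mnm1E eqxx addn1.
Qed.

Lemma mderivXU (R : nzRingType) n (i j : 'I_n) :
  ('X_i : {mpoly R[n]})^`M(j) = (i == j)%:R.
Proof.
rewrite mderivX mnm1E; case: eqP => [->|_]; last by rewrite scale0r.
by rewrite -{1}(add0m U_(j)%MM) addmK mpolyX0 scale1r.
Qed.

Lemma mulX_mderivX (R : comNzRingType) n (i : 'I_n) (m : 'X_{1..n}) :
  'X_i * ('X_[m] : {mpoly R[n]})^`M(i) = (m i)%:R *: 'X_[m].
Proof.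
rewrite mderivX -scalerAr -mpolyXD; have [->|m_i] := eqVneq (m i) 0%N.
  by rewrite !scale0r.
by rewrite addmC submK // lep1mP.
Qed.

Lemma mderivXDU (R : nzRingType) n (i : 'I_n) (m : 'X_{1..n}) :
  ('X_[m + U_(i)] : {mpoly R[n]})^`M(i) = (m i).+1%:R *: 'X_[m].
Proof. by rewrite mderivX mnmDE mnm1E eqxx addn1 addmK. Qed.

Lemma dhomogXU (R : nzRingType) n (i : 'I_n) : ('X_i : {mpoly R[n]}) \is 1.-homog.
Proof. by rewrite dhomogX /= mdeg1. Qed.

Section ChainRule.
Variables (R : comNzRingType) (n k : nat) (t : k.-tuple {mpoly R[n]}).
Implicit Types p q : {mpoly R[k]}.

Let chain_at p := forall i : 'I_n,
  (p \mPo t)^`M(i) = \sum_(j < k) (p^`M(j) \mPo t) * (t`_j)^`M(i).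

Let chain_add p q : chain_at p -> chain_at q -> chain_at (p + q).
Proof.
move=> cp cq i; rewrite comp_mpolyD mderivD cp cq -big_split /=.
by apply: eq_bigr => j _; rewrite mderivD comp_mpolyD mulrDl.
Qed.

Let chain_scale (c : R) p : chain_at p -> chain_at (c *: p).
Proof.
move=> cp i; rewrite comp_mpolyZ mderivZ cp scaler_sumr.
by apply: eq_bigr => j _; rewrite mderivZ comp_mpolyZ scalerAl.
Qed.

Let chain_mul p q : chain_at p -> chain_at q -> chain_at (p * q).
Proof.
move=> cp cq i; rewrite rmorphM mderivM cp cq mulr_suml mulr_sumr -big_split /=.
by apply: eq_bigr => j _; rewrite mderivM rmorphD !rmorphM /=; ring.
Qed.

Let chain_one : chain_at 1.
Proof.
move=> i; rewrite rmorph1 -mpolyC1 mderivC big1 // => j _.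
by rewrite mderivC comp_mpolyC mpolyC0 mul0r.
Qed.

Let chain_X (l : 'I_k) : chain_at 'X_l.
Proof.
move=> i; rewrite comp_mpolyXU (bigD1 l) //= big1 ?addr0.
  by rewrite mderivXU eqxx rmorph1 mul1r.
by move=> j; rewrite eq_sym => /negbTE lj; rewrite mderivXU lj comp_mpoly0 mul0r.
Qed.

Lemma mderiv_comp p i :
  (p \mPo t)^`M(i) = \sum_(j < k) (p^`M(j) \mPo t) * (t`_j)^`M(i).
Proof.
move: i; elim/mpolyind: p => [|c m p _ _ cp] i.
  by rewrite comp_mpoly0 mderiv0 big1 // => j _; rewrite mderiv0 comp_mpoly0 mul0r.
move: i; apply: chain_add => //; apply: chain_scale; rewrite mpolyXE_id.
apply: (big_ind chain_at chain_one chain_mul) => j _.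
by elim: (m j) => [|e ce]; [rewrite expr0 | rewrite exprS; apply: chain_mul].
Qed.
End ChainRule.

Lemma val_ix : val ix = 0%N. Proof. by rewrite /= inordK. Qed.
Lemma val_iy : val iy = 1%N. Proof. by rewrite /= inordK. Qed.
Lemma val_iz : val iz = 2%N. Proof. by rewrite /= inordK. Qed.

Lemma ord3P (j : 'I_3) : [\/ j = ix, j = iy | j = iz].
Proof.
case: j => [[|[|[|k]]] lt_j3] //; [constructor 1 | constructor 2 | constructor 3];
  by apply: val_inj; rewrite /= inordK.
Qed.

Lemma ixy : (ix == iy) = false. Proof. by rewrite -val_eqE /= !inordK. Qed.
Lemma ixz : (ix == iz) = false. Proof. by rewrite -val_eqE /= !inordK. Qed.
Lemma iyz : (iy == iz) = false. Proof. by rewrite -val_eqE /= !inordK. Qed.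
Lemma iyx : (iy == ix) = false. Proof. by rewrite eq_sym ixy. Qed.
Lemma izx : (iz == ix) = false. Proof. by rewrite eq_sym ixz. Qed.
Lemma izy : (iz == iy) = false. Proof. by rewrite eq_sym iyz. Qed.
Definition ord3_eqE := (eqxx, ixy, ixz, iyz, iyx, izx, izy).

Lemma ord2P (l : 'I_2) : l = ax \/ l = abeta.
Proof.
by case: l => [[|[|k]] lt_l2] //; [left | right]; apply: val_inj; rewrite /= inordK.
Qed.

Lemma axb : (ax == abeta) = false.
Proof. by rewrite -val_eqE /= !inordK. Qed.

Lemma sum_ord3 (V : zmodType) (F : 'I_3 -> V) : \sum_(j < 3) F j = F ix + F iy + F iz.
Proof.
rewrite !big_ord_recl big_ord0 addr0 addrA.
by congr (F _ + F _ + F _); apply: val_inj; rewrite /= inordK.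
Qed.

Definition mnm3 (a b c : nat) : 'X_{1..3} := [multinom [tuple a; b; c]].

Lemma mnm3_nth a b c j : mnm3 a b c j = nth 0%N [:: a; b; c] j.
Proof. by rewrite multinomE (tnth_nth 0%N). Qed.

Lemma mnm3_ix a b c : mnm3 a b c ix = a. Proof. by rewrite mnm3_nth val_ix. Qed.
Lemma mnm3_iy a b c : mnm3 a b c iy = b. Proof. by rewrite mnm3_nth val_iy. Qed.
Lemma mnm3_iz a b c : mnm3 a b c iz = c. Proof. by rewrite mnm3_nth val_iz. Qed.
Definition mnm3E := (mnm3_ix, mnm3_iy, mnm3_iz).

Lemma mnm3_eta (m : 'X_{1..3}) : m = mnm3 (m ix) (m iy) (m iz).
Proof. by apply/mnmP => j; case: (ord3P j) => ->; rewrite mnm3E. Qed.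

Lemma eq_mnm3 (m m' : 'X_{1..3}) :
  m ix = m' ix -> m iy = m' iy -> m iz = m' iz -> m = m'.
Proof. by move=> ex ey ez; rewrite (mnm3_eta m) (mnm3_eta m') ex ey ez. Qed.

Lemma mnm3DUx a b c : (mnm3 a b c + U_(ix))%MM = mnm3 a.+1 b c.
Proof. by apply: eq_mnm3; rewrite mnmDE !mnm1E !mnm3E !ord3_eqE ?addn1 ?addn0. Qed.
Lemma mnm3DUy a b c : (mnm3 a b c + U_(iy))%MM = mnm3 a b.+1 c.
Proof. by apply: eq_mnm3; rewrite mnmDE !mnm1E !mnm3E !ord3_eqE ?addn1 ?addn0. Qed.
Lemma mnm3DUz a b c : (mnm3 a b c + U_(iz))%MM = mnm3 a b c.+1.
Proof. by apply: eq_mnm3; rewrite mnmDE !mnm1E !mnm3E !ord3_eqE ?addn1 ?addn0. Qed.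

Lemma mdeg_mnm3 a b c : mdeg (mnm3 a b c) = (a + b + c)%N.
Proof. by rewrite mdegE !big_ord_recr big_ord0 /= add0n !mnm3_nth. Qed.

Lemma eq_mnm3E a b c a' b' c' :
  (mnm3 a b c == mnm3 a' b' c') = [&& a == a', b == b' & c == c'].
Proof.
apply/eqP/and3P => [e|[/eqP-> /eqP-> /eqP->] //].
have := congr1 (fun m : 'X_{1..3} => (m ix, m iy, m iz)) e.
by rewrite /= !mnm3E => -[-> -> ->].
Qed.

Definition mnm2 (e j : nat) : 'X_{1..2} := [multinom [tuple e; j]].

Lemma mnm2_ax e j : mnm2 e j ax = e.
Proof. by rewrite multinomE (tnth_nth 0%N) /= inordK. Qed.
Lemma mnm2_abeta e j : mnm2 e j abeta = j.
Proof. by rewrite multinomE (tnth_nth 0%N) /= inordK. Qed.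

Lemma mnm2DU e j : (mnm2 e j + U_(abeta))%MM = mnm2 e j.+1.
Proof.
apply/mnmP => l; rewrite mnmDE mnm1E; case: (ord2P l) => ->;
  by rewrite !(mnm2_ax, mnm2_abeta) ?eqxx ?(eq_sym abeta) ?axb ?addn0 ?addn1.
Qed.
Section Coefficients.
Variable R : nzRingType.
Implicit Types p q : {mpoly R[3]}.

Definition coef3 p a b c := p@_(mnm3 a b c).

Lemma coef3D p q a b c : coef3 (p + q) a b c = coef3 p a b c + coef3 q a b c.
Proof. exact: mcoeffD. Qed.

Lemma coef3Z (k : R) p a b c : coef3 (k *: p) a b c = k * coef3 p a b c.
Proof. exact: mcoeffZ. Qed.

Lemma coef3MX p a b c :
  coef3 (p * 'X_ix) a b c = if a is a'.+1 then coef3 p a' b c else 0.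
Proof. by rewrite /coef3 mcoeffMXU mnm3E; case: a => // a; rewrite -mnm3DUx addmK. Qed.
Lemma coef3MY p a b c :
  coef3 (p * 'X_iy) a b c = if b is b'.+1 then coef3 p a b' c else 0.
Proof. by rewrite /coef3 mcoeffMXU mnm3E; case: b => // b; rewrite -mnm3DUy addmK. Qed.
Lemma coef3MZ p a b c :
  coef3 (p * 'X_iz) a b c = if c is c'.+1 then coef3 p a b c' else 0.
Proof. by rewrite /coef3 mcoeffMXU mnm3E; case: c => // c; rewrite -mnm3DUz addmK. Qed.

Lemma coef3_mderivX p a b c : coef3 p^`M(ix) a b c = coef3 p a.+1 b c *+ a.+1.
Proof. by rewrite /coef3 mcoeff_mderiv mnm3DUx mnm3E. Qed.
Lemma coef3_mderivY p a b c : coef3 p^`M(iy) a b c = coef3 p a b.+1 c *+ b.+1.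
Proof. by rewrite /coef3 mcoeff_mderiv mnm3DUy mnm3E. Qed.
Lemma coef3_mderivZ p a b c : coef3 p^`M(iz) a b c = coef3 p a b c.+1 *+ c.+1.
Proof. by rewrite /coef3 mcoeff_mderiv mnm3DUz mnm3E. Qed.

Lemma coef3_eq0 p : (forall a b c, coef3 p a b c = 0) -> p = 0.
Proof. by move=> p0; apply/mpolyP => m; rewrite mcoeff0 (mnm3_eta m); apply: p0. Qed.

Lemma coef3_dhomog p d a b c :
  p \is d.-homog -> (a + b + c != d)%N -> coef3 p a b c = 0.
Proof. by move=> hom_p; rewrite -mdeg_mnm3; exact: dhomog_nemf_coeff. Qed.
End Coefficients.

Section Lderivation.
Variable R : comNzRingType.
Implicit Types p q : {mpoly R[3]}.

Definition Lder p : {mpoly R[3]} := p^`M(iy) * 'X_ix + p^`M(iz) * 'X_iy.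

Lemma coef3_Lder p a b c : coef3 (Lder p) a b c = Lcoef (coef3 p) a b c.
Proof.
rewrite /Lder coef3D coef3MX coef3MY /Lcoef.
by case: a => [|a]; case: b => [|b]; rewrite ?coef3_mderivY ?coef3_mderivZ.
Qed.

Lemma LderD p q : Lder (p + q) = Lder p + Lder q.
Proof. by rewrite /Lder !mderivD; ring. Qed.

Lemma LderZ (k : R) p : Lder (k *: p) = k *: Lder p.
Proof. by rewrite /Lder !mderivZ scalerDr -!scalerAl. Qed.

Lemma LderM p q : Lder (p * q) = Lder p * q + p * Lder q.
Proof. by rewrite /Lder !mderivM; ring. Qed.

Lemma LderXx : Lder 'X_ix = 0.
Proof. by rewrite /Lder !mderivXU !ord3_eqE !mul0r addr0. Qed.
Lemma LderXy : Lder 'X_iy = 'X_ix.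
Proof. by rewrite /Lder !mderivXU !ord3_eqE mul1r mul0r addr0. Qed.
End Lderivation.

Section InvariantFields.
Variable R : realFieldType.
Implicit Types f g h : vfield R.

Lemma ad_NT_x h : ad (Nmat R)^T h ix = Lder (h ix).
Proof.
rewrite /ad !sum_ord3 !mxE !val_ix !val_iy !val_iz /= !mpolyC0 !mul0r !mpolyC1 !mul1r.
by rewrite !add0r !addr0 !mulr0 !add0r subr0.
Qed.
Lemma ad_NT_y h : ad (Nmat R)^T h iy = Lder (h iy) - h ix.
Proof.
rewrite /ad !sum_ord3 !mxE !val_ix !val_iy !val_iz /= !mpolyC0 !mul0r !mpolyC1 !mul1r.
by rewrite !add0r !addr0 !mulr0 !add0r.
Qed.
Lemma ad_NT_z h : ad (Nmat R)^T h iz = Lder (h iz) - h iy.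
Proof.
rewrite /ad !sum_ord3 !mxE !val_ix !val_iy !val_iz /= !mpolyC0 !mul0r !mpolyC1 !mul1r.
by rewrite !add0r !addr0 !mulr0 !add0r.
Qed.

Lemma divergenceE h :
  divergence h = (h ix)^`M(ix) + (h iy)^`M(iy) + (h iz)^`M(iz).
Proof. exact: sum_ord3. Qed.

Lemma in_SP d h : in_S d h <->
  [/\ in_F d h, divergence h = 0,
      Lder (h ix) = 0, Lder (h iy) = h ix & Lder (h iz) = h iy].
Proof.
split=> [[[hF div0] adh]|[hF div0 Lx Ly Lz]].
  have ad_at k := congr1 (fun f => f k) adh; move: (ad_at ix) (ad_at iy) (ad_at iz).
  by rewrite /= ad_NT_x ad_NT_y ad_NT_z => Lx /subr0_eq Ly /subr0_eq Lz.
split=> //; apply: functional_extensionality => k.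
by case: (ord3P k) => ->; rewrite ?ad_NT_x ?ad_NT_y ?ad_NT_z ?Ly ?Lz ?subrr.
Qed.

Lemma divergence_lin (c : R) f g :
  divergence (fun k => c *: f k + g k) = c *: divergence f + divergence g.
Proof.
rewrite /divergence scaler_sumr -big_split; apply: eq_bigr => i _.
by rewrite mderivD mderivZ.
Qed.

Lemma in_S_ext d f g : (forall k, f k = g k) -> in_S d f -> in_S d g.
Proof. by move=> fg; rewrite (functional_extensionality _ _ fg). Qed.

Lemma in_S0 d : in_S d (fun _ : 'I_3 => 0 : {mpoly R[3]}).
Proof.
apply/in_SP; split; rewrite /Lder ?mderiv0 ?mul0r ?addr0 //.
- by move=> k; exact: rpred0.
- by rewrite divergenceE !mderiv0 !addr0.
Qed.

Lemma in_S_lin d (c : R) f g :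
  in_S d f -> in_S d g -> in_S d (fun k => c *: f k + g k).
Proof.
case/in_SP=> fF fdiv fx fy fz /in_SP[gF gdiv gx gy gz].
apply/in_SP; split; rewrite ?LderD ?LderZ ?fx ?fy ?fz ?gx ?gy ?gz //.
- by move=> k; rewrite rpredD ?rpredZ.
- by rewrite divergence_lin fdiv gdiv scaler0 addr0.
- by rewrite scaler0 addr0.
Qed.

Lemma in_S_sum d n (c : 'I_n -> R) (F : 'I_n -> vfield R) :
  (forall i, in_S d (F i)) -> in_S d (fun k => \sum_(i < n) c i *: F i k).
Proof.
elim: n c F => [|n IH] c F SF.
  by apply: in_S_ext (in_S0 d) => k; rewrite big_ord0.
apply: in_S_ext (in_S_lin (c ord_max) (SF ord_max) (IH _ _ (fun i => SF _))) => k.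
by rewrite big_ord_recr addrC.
Qed.

Lemma coef3_divergence h a b c : coef3 (divergence h) a b c =
  coef3 (h ix) a.+1 b c *+ a.+1 + coef3 (h iy) a b.+1 c *+ b.+1 +
  coef3 (h iz) a b c.+1 *+ c.+1.
Proof. by rewrite divergenceE !coef3D coef3_mderivX coef3_mderivY coef3_mderivZ. Qed.

(* Coordinate 0 reads the x^d coefficient of h_z; coordinate 2j+1 (2j < d) the
   x^(d-j) z^j coefficient of h_y; coordinate 2j+2 (2j+2 <= d) that of h_x. *)
Definition Scoord d i h : R :=
  match i with
  | 0 => coef3 (h iz) d 0 0
  | k.+1 => if odd k then coef3 (h ix) (d - k./2) 0 k./2
            else coef3 (h iy) (d - k./2) 0 k./2
  end.

Lemma Scoord0 d i : Scoord d i (fun _ => 0) = 0.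
Proof. by rewrite /Scoord; case: i => [|i]; [|case: ifP]; rewrite /coef3 mcoeff0. Qed.

Lemma in_S_eq0 d h : in_S d h ->
  (forall i, (i <= d)%N -> Scoord d i h = 0) -> forall k, h k = 0.
Proof.
case/in_SP=> hF div0 Lx Ly Lz coord0.
have g1L a b c : Lcoef (coef3 (h ix)) a b c = 0.
  by rewrite -coef3_Lder Lx /coef3 mcoeff0.
have g2L a b c : Lcoef (coef3 (h iy)) a b c = coef3 (h ix) a b c by rewrite -coef3_Lder Ly.
have g3L a b c : Lcoef (coef3 (h iz)) a b c = coef3 (h iy) a b c by rewrite -coef3_Lder Lz.
have div a b c : coef3 (h ix) a.+1 b c *+ a.+1 + coef3 (h iy) a b.+1 c *+ b.+1 +
    coef3 (h iz) a b c.+1 *+ c.+1 = 0.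
  by rewrite -coef3_divergence div0 /coef3 mcoeff0.
have hdeg k a b c : (a + b + c != d)%N -> coef3 (h k) a b c = 0.
  exact: coef3_dhomog.
have xz0 j : (j.*2.+2 <= d)%N -> coef3 (h ix) (d - j) 0 j = 0.
  by move/coord0; rewrite /= odd_double uphalf_double.
have yz0 j : (j.*2 < d)%N -> coef3 (h iy) (d - j) 0 j = 0.
  by move/coord0; rewrite /= odd_double doubleK.
have hx := chain_x_eq0 g1L g2L g3L div (hdeg ix) xz0.
have hy := chain_y_eq0 g2L g3L (hdeg iy) hx yz0.
have hz := chain_z_eq0 g3L div (hdeg iz) hx hy (coord0 0%N (leq0n d)).
by move=> k; case: (ord3P k) => ->; apply: coef3_eq0.
Qed.
End InvariantFields.

Section HomogeneousOfIntegerDegree.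
Variable R : realFieldType.
Implicit Types p q : {mpoly R[3]}.

Lemma homog_z_nat n p : homog_z n%:Z p <-> p \is n.-homog.
Proof. by rewrite /homog_z ltz_nat. Qed.

Lemma homog_z0 k : homog_z k (0 : {mpoly R[3]}).
Proof. by rewrite /homog_z; case: ifP => // _; exact: rpred0. Qed.

Lemma homog_zD k p q : homog_z k p -> homog_z k q -> homog_z k (p + q).
Proof.
by rewrite /homog_z; case: ifP => _ hp hq; [rewrite hp hq addr0 | exact: rpredD].
Qed.

Lemma homog_zZ k (c : R) p : homog_z k p -> homog_z k (c *: p).
Proof. by rewrite /homog_z; case: ifP => _ hp; [rewrite hp scaler0 | exact: rpredZ]. Qed.

Lemma homog_zM k e p q :
  homog_z k p -> q \is e.-homog -> homog_z (k + e%:Z) (q * p).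
Proof.
rewrite /homog_z; case: ifP => [_ -> _|k0 hp hq].
  by rewrite mulr0; case: ifP => // _; exact: rpred0.
have -> : (k + e%:Z < 0)%R = false by lia.
by rewrite (_ : absz (k + e%:Z)%R = (e + absz k)%N); [exact: dhomogM | lia].
Qed.
Lemma homog_z_of (k : int) n p :
  k = n%:Z -> p \is n.-homog -> homog_z k p.
Proof. by move=> ->; rewrite homog_z_nat. Qed.
End HomogeneousOfIntegerDegree.

Section FunctionsOfXandBeta.
Variable R : realFieldType.
Implicit Types psi : {mpoly R[2]}.

Lemma mderiv_natr n (i : 'I_3) : (n%:R : {mpoly R[3]})^`M(i) = 0.
Proof. by rewrite mderivMn -mpolyC1 mderivC mul0rn. Qed.

Lemma mderiv_betaX : (beta R)^`M(ix) = 2%:R * 'X_iz.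
Proof. rewrite /beta mderivB expr2 !mderivM !mderivXU !ord3_eqE /= mderiv_natr; ring. Qed.
Lemma mderiv_betaY : (beta R)^`M(iy) = - (2%:R * 'X_iy).
Proof. rewrite /beta mderivB expr2 !mderivM !mderivXU !ord3_eqE /= mderiv_natr; ring. Qed.
Lemma mderiv_betaZ : (beta R)^`M(iz) = 2%:R * 'X_ix.
Proof. rewrite /beta mderivB expr2 !mderivM !mderivXU !ord3_eqE /= mderiv_natr; ring. Qed.

Lemma subst_xb0 : subst_xb (0 : {mpoly R[2]}) = 0.
Proof. exact: comp_mpoly0. Qed.

Lemma Lder_beta : Lder (beta R) = 0.
Proof. rewrite /Lder mderiv_betaY mderiv_betaZ; ring. Qed.

Lemma mderiv_subst_xb psi i : (subst_xb psi)^`M(i) =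
  subst_xb psi^`M(ax) * ('X_ix)^`M(i) + subst_xb psi^`M(abeta) * (beta R)^`M(i).
Proof.
rewrite /subst_xb mderiv_comp !big_ord_recl big_ord0 addr0.
have -> : (ord0 : 'I_2) = ax by apply: val_inj; rewrite /= inordK.
have -> : lift ax (ord0 : 'I_1) = abeta by apply: val_inj; rewrite /= !inordK.
by rewrite /= !inordK.
Qed.

Lemma Lder_subst_xb psi : Lder (subst_xb psi) = 0.
Proof.
have -> : Lder (subst_xb psi) =
    subst_xb psi^`M(ax) * Lder 'X_ix + subst_xb psi^`M(abeta) * Lder (beta R).
  by rewrite /Lder !mderiv_subst_xb; ring.
by rewrite LderXx Lder_beta !mulr0 addr0.
Qed.
End FunctionsOfXandBeta.

Lemma dhomog_beta (R : realFieldType) : beta R \is 2.-homog.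
Proof.
rewrite /beta mulr_natl mulrnAl; apply: rpredB; last exact: (dhomogMn 2 (dhomogXU _ iy)).
by apply: rpredMn; exact: (dhomogM (dhomogXU _ iz) (dhomogXU _ ix)).
Qed.

Lemma psi_cond_subst_xb (R : realFieldType) (a c : {mpoly R[2]}) : psi_cond a c ->
  2%:R * subst_xb c^`M(abeta) + 'X_ix * subst_xb a^`M(ax) + 3%:R * subst_xb a +
  beta R * subst_xb a^`M(abeta) = 0.
Proof.
move=> cond; have := congr1 (@subst_xb R) (subrr (2%:R *: c^`M(abeta))).
rewrite cond /subst_xb comp_mpoly0 !comp_mpolyD !comp_mpolyZ.
rewrite !rmorphM /= !comp_mpolyXU !inordK //= !scaler_nat => e; apply: etrans e; ring.
Qed.

Section ExplicitFields.
Variable R : realFieldType.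
Variables psi1 psi2 psi3 : {mpoly R[2]}.
Let P1 := subst_xb psi1.
Let P2 := subst_xb psi2.
Let P3 := subst_xb psi3.

Lemma h_of_x : h_of psi1 psi2 psi3 ix = 'X_ix ^+ 2 * P1.
Proof. by rewrite /h_of eqxx. Qed.
Lemma h_of_y : h_of psi1 psi2 psi3 iy = 'X_ix * 'X_iy * P1 + 'X_ix * P2.
Proof. by rewrite /h_of !ord3_eqE. Qed.
Lemma h_of_z :
  h_of psi1 psi2 psi3 iz = (2%:R)^-1 *: ('X_iy ^+ 2 * P1) + 'X_iy * P2 + P3.
Proof. by rewrite /h_of !ord3_eqE. Qed.

Lemma scale_half_mul2 (p : {mpoly R[3]}) : (2%:R : R)^-1 *: (2%:R * p) = p.
Proof. by rewrite mulr_natl -scaler_nat scalerA mulVf ?scale1r // pnatr_eq0. Qed.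

Lemma divergence_h_of : psi_cond psi1 psi3 -> divergence (h_of psi1 psi2 psi3) = 0.
Proof.
move=> /psi_cond_subst_xb cond.
have dzY2 : ('X_iy ^+ 2 * P1)^`M(iz) =
    2%:R * ('X_ix * 'X_iy ^+ 2 * subst_xb psi1^`M(abeta)).
  rewrite mderivM mderiv_subst_xb expr2 mderivM !mderivXU !ord3_eqE /=.
  by rewrite mderiv_betaZ; ring.
rewrite divergenceE h_of_x h_of_y h_of_z !mderivD mderivZ dzY2 scale_half_mul2.
rewrite !expr2 !mderivM /P1 /P2 /P3 !mderiv_subst_xb !mderivXU !ord3_eqE /=.
rewrite mderiv_betaX mderiv_betaY mderiv_betaZ -(mulr0 'X_ix) -cond /beta; ring.
Qed.

Lemma Lder_h_of : [/\ Lder (h_of psi1 psi2 psi3 ix) = 0,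
  Lder (h_of psi1 psi2 psi3 iy) = h_of psi1 psi2 psi3 ix &
  Lder (h_of psi1 psi2 psi3 iz) = h_of psi1 psi2 psi3 iy].
Proof.
rewrite h_of_x h_of_y h_of_z !expr2 !LderD LderZ !LderM LderXx LderXy !Lder_subst_xb.
split; try ring.
have -> : (('X_ix * 'X_iy + 'X_iy * 'X_ix) * P1 + 'X_iy * 'X_iy * 0) =
  2%:R * ('X_ix * 'X_iy * P1) by ring.
rewrite scale_half_mul2; ring.
Qed.

Lemma h_of_in_S d : homog_z (d%:Z - 2) P1 -> homog_z (d%:Z - 1) P2 ->
  homog_z d%:Z P3 -> psi_cond psi1 psi3 -> in_S d (h_of psi1 psi2 psi3).
Proof.
move=> hom1 hom2 hom3 cond; have [Lx Ly Lz] := Lder_h_of.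
apply/in_SP; split; rewrite ?divergence_h_of // => k.
have X2P1 i : homog_z d%:Z ('X_i ^+ 2 * P1).
  by have := homog_zM hom1 (dhomogMn 2 (dhomogXU _ i)); rewrite mul1n subrK.
have XP2 i : homog_z d%:Z ('X_i * P2).
  by have := homog_zM hom2 (dhomogXU _ i); rewrite subrK.
suff: homog_z d%:Z (h_of psi1 psi2 psi3 k) by move/homog_z_nat.
case: (ord3P k) => ->; rewrite ?h_of_x ?h_of_y ?h_of_z.
- exact: X2P1.
- apply: homog_zD => //.
  by have := homog_zM hom1 (dhomogM (dhomogXU _ ix) (dhomogXU _ iy)); rewrite add1n subrK.
- by do 2?apply: homog_zD => //; apply: homog_zZ.
Qed.
End ExplicitFields.

Section MonomialsInXandBeta.
Variable R : realFieldType.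

Lemma subst_xbX (m : 'X_{1..2}) :
  subst_xb ('X_[m] : {mpoly R[2]}) = 'X_ix ^+ m ax * beta R ^+ m abeta.
Proof.
rewrite /subst_xb comp_mpolyX !big_ord_recl big_ord0 mulr1 !(tnth_nth 0) /=.
have -> : (ord0 : 'I_2) = ax by apply: val_inj; rewrite /= inordK.
by have -> : lift ax (ord0 : 'I_1) = abeta by apply: val_inj; rewrite /= !inordK.
Qed.

Definition gamma (m : 'X_{1..2}) : R :=
  - (m ax + 3 + m abeta)%N%:R / (2%:R * (m abeta).+1%:R).

Lemma psi_condX m : psi_cond 'X_[m] (gamma m *: 'X_[m + U_(abeta)]).
Proof.
rewrite /psi_cond mderivZ mderivXDU !mulX_mderivX !scalerA -!scalerDl -scaleNr.
congr (_ *: _); rewrite /gamma !natrD; field.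
by rewrite addrC natr1 pnatr_eq0.
Qed.

Lemma psi_cond00 : psi_cond (0 : {mpoly R[2]}) 0.
Proof. by rewrite /psi_cond !mderiv0 !scaler0 !mulr0 oppr0 !addr0. Qed.

Lemma psi_cond0X (m : 'X_{1..2}) : m abeta = 0%N -> psi_cond (0 : {mpoly R[2]}) 'X_[m].
Proof.
move=> m_b; rewrite /psi_cond mderivX m_b !scale0r !mderiv0.
by rewrite !scaler0 !mulr0 oppr0 !addr0.
Qed.
End MonomialsInXandBeta.

Lemma dhomog_subst_xbX (R : realFieldType) (m : 'X_{1..2}) :
  subst_xb ('X_[m] : {mpoly R[2]}) \is (m ax + (m abeta).*2).-homog.
Proof.
have := dhomogM (dhomogMn (m ax) (dhomogXU R ix)) (dhomogMn (m abeta) (dhomog_beta R)).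
by rewrite subst_xbX mul1n mul2n.
Qed.
Section YfreeCoefficients.
Variable R : realFieldType.
Implicit Types q : {mpoly R[3]}.

Lemma coef3_Xn e a c :
  coef3 ('X_ix ^+ e : {mpoly R[3]}) a 0 c = ((a == e) && (c == 0%N))%:R.
Proof.
rewrite /coef3 mpolyXn mcoeffX (_ : (U_(ix) *+ e)%MM = mnm3 e 0 0).
  by rewrite eq_mnm3E eqxx /= (eq_sym e) (eq_sym 0%N).
by apply: eq_mnm3; rewrite mulmnE mnm1E !mnm3E !ord3_eqE ?mul1n ?mul0n.
Qed.

Lemma coef3_Mbeta q a c : coef3 (q * beta R) a 0 c =
  if (a, c) is (a'.+1, c'.+1) then coef3 q a' 0 c' *+ 2 else 0.
Proof.
have -> : q * beta R = (q * 'X_iz * 'X_ix) *+ 2 - q * 'X_iy * 'X_iy by rewrite /beta; ring.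
rewrite /coef3 mcoeffB mcoeffMn -!/(coef3 _ _ _ _) coef3MY subr0 coef3MX.
by case: a => [|a]; rewrite ?mul0rn // coef3MZ; case: c => [|c]; rewrite ?mul0rn.
Qed.

Lemma coef3_XnBeta e j a c : coef3 ('X_ix ^+ e * beta R ^+ j) a 0 c =
  if (a == e + j)%N && (c == j) then 2%:R ^+ j else 0.
Proof.
elim: j a c => [|j IH] a c.
  by rewrite expr0 mulr1 coef3_Xn addn0; case: ifP.
rewrite exprSr mulrA coef3_Mbeta.
case: a => [|a]; first by rewrite addnS.
case: c => [|c]; first by rewrite andbF.
by rewrite IH addnS !eqSS; case: ifP; rewrite ?mul0rn // exprSr mulr_natr.
Qed.
Lemma coef3_Xn_subst_xbX n e j a c :
  coef3 ('X_ix ^+ n * subst_xb ('X_[mnm2 e j] : {mpoly R[2]})) a 0 c =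
  if (a == n + e + j)%N && (c == j) then 2%:R ^+ j else 0.
Proof. by rewrite subst_xbX mnm2_ax mnm2_abeta mulrA -exprD coef3_XnBeta ?addnA. Qed.
End YfreeCoefficients.

Section YfreePart.
Variable R : realFieldType.
Variables psi1 psi2 psi3 : {mpoly R[2]}.

Lemma Scoord_h_of d l : Scoord d l (h_of psi1 psi2 psi3) =
  match l with
  | 0 => coef3 (subst_xb psi3) d 0 0
  | k.+1 => if odd k then coef3 ('X_ix ^+ 2 * subst_xb psi1) (d - k./2) 0 k./2
            else coef3 ('X_ix * subst_xb psi2) (d - k./2) 0 k./2
  end.
Proof.
case: l => [|k] /=; last case: ifP => _.
- rewrite h_of_z !coef3D coef3Z (mulrC 'X_iy (subst_xb psi2)).
  rewrite (_ : 'X_iy ^+ 2 * _ = 'X_iy * subst_xb psi1 * 'X_iy) ?coef3MY; last by ring.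
  by rewrite mulr0 !add0r.
- by rewrite h_of_x.
- by rewrite h_of_y coef3D mulrAC coef3MY add0r.
Qed.
End YfreePart.

Section Basis.
Variables (R : realFieldType) (d : nat).

(* Index 0 is the field x^d e_z; index 2j+1 (2j < d) has psi2 = x^(d-2j-1) beta^j,
   index 2j+2 (2j+2 <= d) has psi1 = x^(d-2j-2) beta^j. *)
Definition basis_mnm k : 'X_{1..2} := mnm2 (d - k.+1) k./2.

Definition basis_psi1 i : {mpoly R[2]} :=
  if i is k.+1 then if odd k then 'X_[basis_mnm k] else 0 else 0.
Definition basis_psi2 i : {mpoly R[2]} :=
  if i is k.+1 then if odd k then 0 else 'X_[basis_mnm k] else 0.
Definition basis_psi3 i : {mpoly R[2]} :=
  if i is k.+1 then
    if odd k then gamma R (basis_mnm k) *: 'X_[basis_mnm k + U_(abeta)] else 0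
  else 'X_[mnm2 d 0].

Definition basis_field i : vfield R :=
  h_of (basis_psi1 i) (basis_psi2 i) (basis_psi3 i).

Lemma basis_psi_spec i : (i <= d)%N ->
  [/\ homog_z (d%:Z - 2) (subst_xb (basis_psi1 i)),
      homog_z (d%:Z - 1) (subst_xb (basis_psi2 i)),
      homog_z d%:Z (subst_xb (basis_psi3 i))
    & psi_cond (basis_psi1 i) (basis_psi3 i)].
Proof.
case: i => [|k] le_id /=.
  split; rewrite ?subst_xb0; [exact: homog_z0 | exact: homog_z0 | |].
    by apply: homog_z_of (dhomog_subst_xbX _ _); rewrite mnm2_ax mnm2_abeta addn0.
  exact/psi_cond0X/mnm2_abeta.
have hom := dhomog_subst_xbX R (basis_mnm k); rewrite /basis_mnm mnm2_ax mnm2_abeta in hom.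
have kE := odd_double_half k.
case: ifP => odd_k; rewrite odd_k in kE; rewrite !subst_xb0.
  split; [ | exact: homog_z0 | | exact: psi_condX].
    by apply: homog_z_of hom; lia.
  rewrite /subst_xb comp_mpolyZ; apply: homog_zZ; apply: homog_z_of (dhomog_subst_xbX _ _).
  by rewrite !mnmDE !mnm1E /basis_mnm !mnm2_ax !mnm2_abeta eqxx eq_sym axb; lia.
split; [exact: homog_z0 | | exact: homog_z0 | exact: psi_cond00].
by apply: homog_z_of hom; lia.
Qed.

Definition basis_weight i : R := if i is k.+1 then 2%:R ^+ k./2 else 1.

Lemma Scoord_basis l i : (l <= d)%N -> (i <= d)%N ->
  Scoord d l (basis_field i) = if l == i then basis_weight l else 0.
Proof.
have X1 p : 'X_ix * p = 'X_ix ^+ 1 * p :> {mpoly R[3]} by rewrite expr1.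
have X0 p : p = 'X_ix ^+ 0 * p :> {mpoly R[3]} by rewrite expr0 mul1r.
move=> le_l le_i; rewrite /basis_field Scoord_h_of /basis_psi1 /basis_psi2 /basis_psi3.
case: l le_l => [|k] le_l; case: i le_i => [|k'] le_i; rewrite ?eqSS /=.
- by rewrite (X0 (subst_xb _)) coef3_Xn_subst_xbX add0n addn0 !eqxx.
- case: ifP => _; last by rewrite subst_xb0 /coef3 mcoeff0.
  rewrite /subst_xb comp_mpolyZ -/(subst_xb _) coef3Z /basis_mnm mnm2DU.
  by rewrite (X0 (subst_xb _)) coef3_Xn_subst_xbX andbF mulr0.
- by case: ifP => _; rewrite subst_xb0 mulr0 /coef3 mcoeff0.
have kE := odd_double_half k; have k'E := odd_double_half k'.
case: ifP => odd_k; case: ifP => odd_k';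
  rewrite ?subst_xb0 ?mulr0 /coef3 ?mcoeff0 -/(coef3 _ _ _ _);
  rewrite ?(X1 (subst_xb _)) ?coef3_Xn_subst_xbX;
  rewrite ?odd_k ?odd_k' /= -mul2n in kE k'E.
(* lia copes with the halves only once they are abstracted as plain variables. *)
all: move: kE k'E; move: (k./2) (k'./2) => h h' kE k'E.
all: have [e|ne] := eqVneq k k'; try congruence; try done.
all: first [ by rewrite ifT; [congr (_ ^+ _); lia | apply/andP; split; apply/eqP; lia]
           | by rewrite ifF //; apply/andP => -[_ /eqP]; lia ].
Qed.
End Basis.

Section Linearity.
Variables (R : realFieldType) (n : nat) (c : 'I_n -> R).
Implicit Types A B C : 'I_n -> {mpoly R[2]}.

Lemma subst_xb_sum A :
  subst_xb (\sum_(i < n) c i *: A i) = \sum_(i < n) c i *: subst_xb (A i).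
Proof. by rewrite /subst_xb raddf_sum; apply: eq_bigr => i _; exact: comp_mpolyZ. Qed.

Lemma homog_z_sum k (P : 'I_n -> {mpoly R[3]}) :
  (forall i, homog_z k (P i)) -> homog_z k (\sum_(i < n) c i *: P i).
Proof.
move=> homP; apply: (big_ind (homog_z k)); [exact: homog_z0 | exact: homog_zD |].
by move=> i _; exact: homog_zZ.
Qed.

Lemma psi_cond_sum A C : (forall i, psi_cond (A i) (C i)) ->
  psi_cond (\sum_(i < n) c i *: A i) (\sum_(i < n) c i *: C i).
Proof.
have dsum (j : 'I_2) (P : 'I_n -> {mpoly R[2]}) :
    (\sum_(i < n) c i *: P i)^`M(j) = \sum_(i < n) c i *: (P i)^`M(j).
  rewrite (big_morph _ (@mderivD _ _ j) (@mderiv0 _ _ j)).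
  by apply: eq_bigr => i _; exact: mderivZ.
rewrite /psi_cond => condAC; rewrite !dsum !scaler_sumr -sumrN !mulr_sumr -!big_split /=.
apply: eq_bigr => i _; rewrite scalerA (mulrC 2%:R) -scalerA -scalerN condAC !scalerDr.
by rewrite !scalerAr !scalerA (mulrC 3%:R).
Qed.

Lemma h_of_sum A B C k :
  h_of (\sum_(i < n) c i *: A i) (\sum_(i < n) c i *: B i) (\sum_(i < n) c i *: C i) k =
  \sum_(i < n) c i *: h_of (A i) (B i) (C i) k.
Proof.
case: (ord3P k) => ->; rewrite ?h_of_x ?h_of_y ?h_of_z !subst_xb_sum !mulr_sumr.
- by apply: eq_bigr => i _; rewrite h_of_x scalerAr.
- by rewrite -big_split; apply: eq_bigr => i _; rewrite h_of_y scalerDr !scalerAr.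
rewrite scaler_sumr -!big_split; apply: eq_bigr => i _.
by rewrite h_of_z !scalerDr !scalerAr !scalerA [_ * c i]mulrC.
Qed.
End Linearity.

Section SpanningSet.
Variables (R : realFieldType) (d : nat).

Lemma Scoord_lin j (a : R) (f g : vfield R) :
  Scoord d j (fun k => a *: f k + g k) = a * Scoord d j f + Scoord d j g.
Proof. by rewrite /Scoord; case: j => [|j]; [|case: ifP => _]; rewrite coef3D coef3Z. Qed.

Lemma Scoord_sum j n (c : 'I_n -> R) (F : 'I_n -> vfield R) :
  Scoord d j (fun k => \sum_(i < n) c i *: F i k) = \sum_(i < n) c i * Scoord d j (F i).
Proof.
have coef3_sum (P : 'I_n -> {mpoly R[3]}) a b e :
    coef3 (\sum_(i < n) c i *: P i) a b e = \sum_(i < n) c i * coef3 (P i) a b e.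
  by rewrite /coef3 raddf_sum; apply: eq_bigr => i _; exact: mcoeffZ.
by rewrite /Scoord; case: j => [|j]; [|case: ifP => _]; exact: coef3_sum.
Qed.

Lemma basis_weight_neq0 i : basis_weight R i != 0.
Proof. by case: i => [|i] /=; rewrite ?oner_neq0 // expf_neq0 // pnatr_eq0. Qed.

Lemma basis_field_in_S (i : 'I_d.+1) : in_S d (basis_field R d i).
Proof.
by have [h1 h2 h3 cond] := basis_psi_spec R (leq_ord i); exact: h_of_in_S.
Qed.

Lemma Scoord_basis_sum (c : 'I_d.+1 -> R) j : (j <= d)%N ->
  \sum_(i < d.+1) c i * Scoord d j (basis_field R d i) = c (inord j) * basis_weight R j.
Proof.
move=> le_jd; rewrite (bigD1 (inord j)) //= big1 ?addr0.
  by rewrite Scoord_basis ?inordK ?eqxx // -ltnS.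
move=> i /negbTE; rewrite -val_eqE /= inordK // => ne_ij.
by rewrite Scoord_basis ?(eq_sym j) ?ne_ij ?mulr0 // -ltnS.
Qed.

Lemma basis_field_free (c : 'I_d.+1 -> R) :
  (forall k, \sum_(i < d.+1) c i *: basis_field R d i k = 0) -> forall i, c i = 0.
Proof.
move=> c0 i; have := Scoord_sum i c (basis_field R d).
rewrite Scoord_basis_sum -1?ltnS // inord_val (functional_extensionality _ _ c0) Scoord0.
by move/esym/eqP; rewrite mulf_eq0 (negbTE (basis_weight_neq0 _)) orbF => /eqP.
Qed.

Lemma basis_field_span h : in_S d h ->
  exists c : 'I_d.+1 -> R, forall k, h k = \sum_(i < d.+1) c i *: basis_field R d i k.
Proof.
move=> Sh; pose c i := Scoord d i h / basis_weight R i; exists c.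
pose g k := \sum_(i < d.+1) - c i *: basis_field R d i k.
have Sg : in_S d g by apply: in_S_sum => i; exact: basis_field_in_S.
have h_g0 := in_S_eq0 (in_S_lin 1 Sh Sg).
have {h_g0} h_g0 : forall k, 1 *: h k + g k = 0.
  apply: h_g0 => j le_jd; rewrite Scoord_lin Scoord_sum.
  under eq_bigr => i _ do rewrite mulNr.
  by rewrite sumrN Scoord_basis_sum // /c inordK // divfK ?basis_weight_neq0 // mul1r subrr.
move=> k; move/(canRL (addrK _)): (h_g0 k); rewrite scale1r sub0r -sumrN => ->.
by apply: eq_bigr => i _; rewrite scaleNr opprK.
Qed.
End SpanningSet.

Theorem lemma8 (R : realFieldType) (d : nat) (hd : (1 <= d)%N) :
  (forall h : vfield R,
     in_S d h <->
     exists psi1 psi2 psi3 : {mpoly R[2]},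
       [/\ homog_z (d%:Z - 2) (subst_xb psi1),
           homog_z (d%:Z - 1) (subst_xb psi2),
           homog_z d%:Z (subst_xb psi3),
           psi_cond psi1 psi3
         & h = h_of psi1 psi2 psi3]) /\
  (exists b : 'I_d.+1 -> vfield R,
     [/\ forall i, in_S d (b i),
         forall c : 'I_d.+1 -> R,
           (forall k, \sum_(i < d.+1) c i *: b i k = 0) -> forall i, c i = 0
       & forall h, in_S d h ->
           exists c : 'I_d.+1 -> R, forall k, h k = \sum_(i < d.+1) c i *: b i k]).
Proof.
split; last first.
  exists (basis_field R d); split; [exact: basis_field_in_S | exact: basis_field_free |].
  exact: basis_field_span.
move=> h; split=> [Sh|[psi1 [psi2 [psi3 [hom1 hom2 hom3 cond ->]]]]]; last exact: h_of_in_S.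
have [c hc] := basis_field_span Sh.
have spec (i : 'I_d.+1) := basis_psi_spec R (leq_ord i).
exists (\sum_(i < d.+1) c i *: basis_psi1 R d i), (\sum_(i < d.+1) c i *: basis_psi2 R d i),
  (\sum_(i < d.+1) c i *: basis_psi3 R d i).
split; rewrite ?subst_xb_sum.
- by apply: homog_z_sum => i; case: (spec i).
- by apply: homog_z_sum => i; case: (spec i).
- by apply: homog_z_sum => i; case: (spec i).
- by apply: psi_cond_sum => i; case: (spec i).
- by apply: functional_extensionality => k; rewrite h_of_sum hc.
Qed.
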